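(* Let $T>0$. The map $G$ defined by $G(X)_t=\tau_tX_t$, $t\in[0,T]$, is continuous from $\mathcal{C}([0,T],\mathcal{S}')$ into itself.
   Context: $\mathcal{S}$ is the Schwartz space on $\mathbb{R}$ (smooth functions with the topology of the semi-norms $\sup_x|x^\beta\phi^{(\gamma)}(x)|$), $\mathcal{S}'$ its dual, the space of tempered distributions, with duality $\langle\mu,\phi\rangle$. For $x\in\mathbb{R}$ and $\mu\in\mathcal{S}'$, $\tau_x\mu$ is the tempered distribution with $\langle\tau_x\mu,\phi\rangle=\langle\mu,\tau_x\phi\rangle$, where $\tau_x\phi(\cdot)=\phi(\cdot-x)$. A path $X:[0,T]\to\mathcal{S}'$ belongs to $\mathcal{C}([0,T],\mathcal{S}')$ (resp. $\mathcal{D}([0,T],\mathcal{S}')$) iff $t\mapsto\langle X_t,\phi\rangle$ is continuous (resp. right-continuous with left limits) for every $\phi\in\mathcal{S}$; these spaces carry their usual (uniform, resp. Skorokhod) topologies. *)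

From HB Require Import structures.
From mathcomp Require Import all_boot all_order all_algebra.
From mathcomp Require Import all_classical all_reals all_analysis.
Set Implicit Arguments. Unset Strict Implicit. Unset Printing Implicit Defensive.
Import Order.TTheory GRing.Theory Num.Theory.
Import numFieldNormedType.Exports.
Local Open Scope classical_set_scope.
Local Open Scope ring_scope.

Section Schwartz.
Variable R : realType.

Definition smooth (phi : R -> R) : Prop :=
  forall (n : nat) (x : R), derivable (derive1n n phi) x 1.

Definition schwartz (phi : R -> R) : Prop :=
  smooth phi /\
  forall b g : nat, exists C : R, forall x : R,
      `| x ^+ b * derive1n g phi x | <= C.

(* tempered distributions: functionals on functions, only their values on
   Schwartz functions matter; linear on S and continuous for the
   semi-norm topology of S (i.e. |mu phi| <= C * max_{b,g<=N} p_{b,g}(phi)) *)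
Definition tempered (mu : (R -> R) -> R) : Prop :=
  (forall (a : R) (phi psi : R -> R), schwartz phi -> schwartz psi ->
      mu (fun x => a * phi x + psi x) = a * mu phi + mu psi) /\
  exists (N : nat) (C : R), forall phi : R -> R, schwartz phi ->
    forall M : R,
      (forall (b g : nat) (x : R), (b <= N)%N -> (g <= N)%N ->
          `| x ^+ b * derive1n g phi x | <= M) ->
      `| mu phi | <= C * M.

Definition S_bounded (B : set (R -> R)) : Prop :=
  B `<=` schwartz /\
  forall b g : nat, exists C : R, forall phi, B phi -> forall x : R,
      `| x ^+ b * derive1n g phi x | <= C.

Definition tau_fun (x : R) (phi : R -> R) : R -> R := fun y => phi (y - x).
Definition tau (x : R) (mu : (R -> R) -> R) : (R -> R) -> R :=
  fun phi => mu (tau_fun x phi).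

(* paths [0,T] -> S' (represented as functions R -> S', only [0,T] matters) *)
Definition path_C (T : R) (X : R -> (R -> R) -> R) : Prop :=
  (forall t, t \in `[0, T] -> tempered (X t)) /\
  forall phi, schwartz phi ->
    {within `[0, T], continuous (fun t => X t phi)}.

Definition G (X : R -> (R -> R) -> R) : R -> (R -> R) -> R :=
  fun t => tau t (X t).

(* continuity of a map F : C([0,T],S') -> C([0,T],S') for the uniform topology
   (uniform convergence on [0,T] w.r.t. the strong topology of S', whose
   semi-norms are sup_{phi in B} |<mu,phi>|, B bounded in S), unfolded at
   every point X, using the directed family of semi-norms
   sup_{t in [0,T]} sup_{phi in B} |<X_t,phi>|. *)
Definition continuous_C (T : R)
    (F : (R -> (R -> R) -> R) -> (R -> (R -> R) -> R)) : Prop :=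
  forall X, path_C T X ->
  forall (B : set (R -> R)) (eps : R), S_bounded B -> 0 < eps ->
  exists (B' : set (R -> R)) (delta : R), S_bounded B' /\ 0 < delta /\
    forall Y, path_C T Y ->
      (forall t phi, t \in `[0, T] -> B' phi -> `| Y t phi - X t phi | <= delta) ->
      (forall t phi, t \in `[0, T] -> B phi -> `| F Y t phi - F X t phi | <= eps).

End Schwartz.

From mathcomp Require Import all_boot all_order all_algebra.
From mathcomp Require Import all_classical all_reals all_analysis.
From mathcomp Require Import ring lra.
Set Implicit Arguments. Unset Strict Implicit. Unset Printing Implicit Defensive.
Import Order.TTheory GRing.Theory Num.Theory.
Import numFieldNormedType.Exports.
Local Open Scope classical_set_scope.
Local Open Scope ring_scope.

(* Continuity of G itself is immediate: on a bounded set B of test functions,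
   G Y - G X is controlled by Y - X on the bounded set of translates
   {tau_t phi : t in [0, T], phi in B}.  The substance is that G X is again a
   continuous path.  Writing
     <X_t, tau_t phi> - <X_s, tau_s phi>
       = <X_t, tau_t phi - tau_s phi> + <X_t - X_s, tau_s phi>,
   the second term is small by continuity of X.  For the first one,
   t |-> tau_t phi is Lipschitz for every semi-norm of S (mean value theorem),
   and the family {X_t : t in [0, T]} is equicontinuous, i.e. bounded by a single
   C * p_N.  This uniform boundedness principle is proved by a gliding hump:
   otherwise one sums a rapidly decreasing series of Schwartz functions chi_j
   (S is complete, which amounts to differentiating series termwise) such that
   |<X_(t_j), sum chi>| >= j, contradicting the boundedness of the continuous
   map t |-> <X_t, sum chi> on the compact [0, T]. *)

Section Calculus.
Variable R : realType.
Implicit Types (f g : R -> R) (a t x : R).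

Lemma derivable_tau_fun f t x :
  derivable f (x - t) 1 -> derivable (tau_fun t f) x 1.
Proof.
by move=> df; rewrite /derivable /tau_fun /=; under eq_fun do rewrite -addrA.
Qed.

Lemma derive1_tau_fun f t : derive1 (tau_fun t f) = tau_fun t (derive1 f).
Proof.
by apply/funext => x; rewrite /derive1 /tau_fun; under eq_fun do rewrite -addrA.
Qed.

Lemma derive1n_tau_fun f t n :
  derive1n n (tau_fun t f) = tau_fun t (derive1n n f).
Proof. by elim: n => // n IH; rewrite !derive1nS IH derive1_tau_fun. Qed.

Lemma smooth_tau_fun f t : smooth f -> smooth (tau_fun t f).
Proof.
by move=> sf n x; rewrite derive1n_tau_fun; exact: derivable_tau_fun.
Qed.

Lemma derive1n_lin a f g n : smooth f -> smooth g ->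
  derive1n n (fun y => a * f y + g y) =
  fun y => a * derive1n n f y + derive1n n g y.
Proof.
move=> sf sg; elim: n => // n IH; rewrite derive1nS IH; apply/funext => x.
have [df dg] := (sf n x, sg n x).
rewrite -[X in derive1 X]/(a *: derive1n n f + derive1n n g).
rewrite !derive1nS !derive1E deriveD ?deriveZ //.
exact: derivableZ.
Qed.

Lemma smooth_lin a f g : smooth f -> smooth g ->
  smooth (fun y => a * f y + g y).
Proof.
move=> sf sg n x; rewrite derive1n_lin //.
rewrite -[X in derivable X]/(a *: derive1n n f + derive1n n g).
by apply: derivableD => //; exact: derivableZ.
Qed.

Lemma derive1n_cst0 n : derive1n n (fun _ : R => 0 : R) = fun _ => 0.
Proof.
elim: n => // n IH; rewrite derive1nS IH; apply/funext => x.
exact: (derive1_cst (0 : R)).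
Qed.

Lemma smooth_cst0 : smooth (fun _ : R => 0 : R).
Proof. by move=> n x; rewrite derive1n_cst0; exact: (derivable_cst (0 : R)). Qed.

Lemma ler_dist_derive1 f c a b : (forall y, derivable f y 1) ->
  (forall y, `|derive1 f y| <= c) -> `|f b - f a| <= c * `|b - a|.
Proof.
move=> df hc; wlog ab : a b / a <= b.
  move=> W; have [/W//|/ltW ba] := leP a b.
  by rewrite distrC (distrC b); apply: W.
have [z _ ->] := @MVT_segment R f (fun z => derive f z 1) a b ab
  (fun z _ => derivableP (df z)) (derivable_within_continuous (fun z _ => df z)).
by rewrite normrM -derive1E ler_wpM2r.
Qed.

End Calculus.

Section Seminorms.
Variable R : realType.
Implicit Types (f g : R -> R) (a t x : R).

Lemma normrX_le_shift x t b :
  `|x| ^+ b <= (1 + `|t|) ^+ b * (1 + `|x - t| ^+ b).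
Proof.
have hx : `|x| <= `|x - t| + `|t| by have := ler_normD (x - t) t; rewrite subrK.
have t1 : 0 <= 1 + `|t| by rewrite addr_ge0.
have [xt1|xt1] := lerP `|x - t| 1.
- apply: (@le_trans _ _ ((1 + `|t|) ^+ b)).
    by apply: lerXn2r; rewrite ?nnegrE // (le_trans hx) // lerD2r.
  by rewrite ler_peMr ?exprn_ge0 // lerDl exprn_ge0.
- apply: (@le_trans _ _ ((1 + `|t|) ^+ b * `|x - t| ^+ b)); last first.
    by rewrite ler_wpM2l ?exprn_ge0 // lerDr.
  rewrite -exprMn; apply: lerXn2r; rewrite ?nnegrE ?mulr_ge0 //.
  apply: (le_trans hx); rewrite mulrDl mul1r lerD2l.
  by rewrite ler_peMr // ltW.
Qed.

Lemma normr_weight_shift_le x t v b :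
  `|x ^+ b * v| <= (1 + `|t|) ^+ b * (`|v| + `|(x - t) ^+ b * v|).
Proof.
rewrite !normrM !normrX.
apply: le_trans (ler_wpM2r (normr_ge0 v) (normrX_le_shift x t b)) _.
by rewrite -mulrA mulrDl mul1r.
Qed.

Definition seminorms_le (N : nat) f (M : R) : Prop :=
  forall (b g : nat) x, (b <= N)%N -> (g <= N)%N ->
    `| x ^+ b * derive1n g f x | <= M.

Lemma seminorms_le_ge0 N f M : seminorms_le N f M -> 0 <= M.
Proof. by move=> h; exact: le_trans (h 0%N 0%N 0 isT isT). Qed.

Lemma seminorms_leW N N' f M M' : (N' <= N)%N -> M <= M' ->
  seminorms_le N f M -> seminorms_le N' f M'.
Proof.
move=> NN' MM' h b g x hb hg; apply: le_trans MM'.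
by apply: h; apply: leq_trans NN'.
Qed.

Lemma seminorms_le_scale N f M c : smooth f -> seminorms_le N f M ->
  seminorms_le N (fun y => c * f y) (`|c| * M).
Proof.
move=> sf h b g x hb hg.
have -> : (fun y => c * f y) = (fun y => c * f y + 0).
  by apply/funext => y; rewrite addr0.
rewrite derive1n_lin //; last exact: smooth_cst0.
by rewrite derive1n_cst0 addr0 mulrCA normrM ler_wpM2l // h.
Qed.

Lemma weight_derive1n_tau_fun_le f t (b g : nat) x :
  `|x ^+ b * derive1n g (tau_fun t f) x| <=
  (1 + `|t|) ^+ b * (`|derive1n g f (x - t)| +
                     `|(x - t) ^+ b * derive1n g f (x - t)|).
Proof. by rewrite derive1n_tau_fun; exact: normr_weight_shift_le. Qed.

Lemma seminorms_le_tau_fun N f M t : seminorms_le N f M ->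
  seminorms_le N (tau_fun t f) ((1 + `|t|) ^+ N * (M + M)).
Proof.
move=> h b g x hb hg; apply: le_trans (weight_derive1n_tau_fun_le _ _ _ _ _) _.
have M0 := seminorms_le_ge0 h.
apply: ler_pM; rewrite ?exprn_ge0 ?addr_ge0 //.
- by apply: ler_weXn2l => //; rewrite lerDl.
- apply: lerD; last exact: h.
  by have := h 0%N g (x - t) isT hg; rewrite expr0 mul1r.
Qed.

Lemma schwartz_seminorms_le f N : schwartz f -> exists M, seminorms_le N f M.
Proof.
case=> _ hf; have [C hC] := choice (fun bg : nat * nat => hf bg.1 bg.2).
exists (\sum_(b < N.+1) \sum_(g < N.+1) `|C (b : nat, g : nat)|) => b g x hb hg.
apply: le_trans (hC (b, g) x) _; apply: le_trans (ler_norm _) _.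
rewrite (bigD1 (Ordinal (hb : (b < N.+1)%N))) //=.
rewrite (bigD1 (Ordinal (hg : (g < N.+1)%N))) //=.
by rewrite -addrA lerDl addr_ge0 // sumr_ge0 // => *; rewrite sumr_ge0.
Qed.

Lemma schwartz_cst0 : schwartz (fun _ : R => 0 : R).
Proof.
split; first exact: smooth_cst0.
by move=> b g; exists 0 => x; rewrite derive1n_cst0 mulr0 normr0.
Qed.

Lemma schwartz_lin a f g : schwartz f -> schwartz g ->
  schwartz (fun y => a * f y + g y).
Proof.
move=> [sf bf] [sg bg]; split; first exact: smooth_lin.
move=> b n; have [C1 h1] := bf b n; have [C2 h2] := bg b n.
exists (`|a| * C1 + C2) => x; rewrite derive1n_lin // mulrDr.
apply: le_trans (ler_normD _ _) _; apply: lerD => //.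
by rewrite mulrCA normrM ler_wpM2l.
Qed.

Lemma schwartzD f g : schwartz f -> schwartz g -> schwartz (fun y => f y + g y).
Proof.
move=> sf sg; have := schwartz_lin 1 sf sg.
by under eq_fun do rewrite mul1r.
Qed.

Lemma schwartzZ c f : schwartz f -> schwartz (fun y => c * f y).
Proof.
move=> sf; have := schwartz_lin c sf schwartz_cst0.
by under eq_fun do rewrite addr0.
Qed.

Lemma schwartz_tau_fun f t : schwartz f -> schwartz (tau_fun t f).
Proof.
move=> [sf bf]; split; first exact: smooth_tau_fun.
move=> b g; have [C1 h1] := bf 0%N g; have [C2 h2] := bf b g.
exists ((1 + `|t|) ^+ b * (C1 + C2)) => x.
apply: le_trans (weight_derive1n_tau_fun_le _ _ _ _ _) _.
rewrite ler_wpM2l ?exprn_ge0 ?addr_ge0 // lerD //.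
by have := h1 (x - t); rewrite expr0 mul1r.
Qed.

End Seminorms.

Section Tempered.
Variable R : realType.
Implicit Types (f g : R -> R) (mu : (R -> R) -> R).

Definition tempered_bound (N : nat) (C : R) mu : Prop :=
  forall phi, schwartz phi -> forall M,
    seminorms_le N phi M -> `|mu phi| <= C * M.

Lemma tempered_cst0 mu : tempered mu -> mu (fun _ => 0) = 0.
Proof.
case=> lin _; have := lin 1 _ _ (@schwartz_cst0 R) (@schwartz_cst0 R).
under eq_fun do rewrite mulr0 addr0.
by rewrite mul1r; lra.
Qed.

Lemma temperedD mu f g : tempered mu -> schwartz f -> schwartz g ->
  mu (fun y => f y + g y) = mu f + mu g.
Proof.
case=> lin _ sf sg; have := lin 1 _ _ sf sg.
by under eq_fun do rewrite mul1r; rewrite mul1r.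
Qed.

Lemma temperedZ mu c f : tempered mu -> schwartz f ->
  mu (fun y => c * f y) = c * mu f.
Proof.
move=> tm sf; have := tm.1 c _ _ sf (@schwartz_cst0 R).
by under eq_fun do rewrite addr0; rewrite tempered_cst0 // addr0.
Qed.

Lemma tempered_boundP mu : tempered mu ->
  exists N C, 0 <= C /\ tempered_bound N C mu.
Proof.
case=> _ [N [C h]]; exists N, (Num.max C 0).
split; first by rewrite le_max lexx orbT.
move=> phi sphi M hM; apply: le_trans (h phi sphi M hM) _.
by rewrite ler_wpM2r ?le_max ?lexx // (seminorms_le_ge0 hM).
Qed.

Lemma tempered_tau mu t : tempered mu -> tempered (tau t mu).
Proof.
move=> tm; split => [a phi psi sphi spsi|].
  exact: tm.1 a _ _ (schwartz_tau_fun t sphi) (schwartz_tau_fun t spsi).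
have [N [C [C0 hC]]] := tempered_boundP tm.
exists N, (C * ((1 + `|t|) ^+ N * 2)) => phi sphi M hM.
have -> : C * ((1 + `|t|) ^+ N * 2) * M = C * ((1 + `|t|) ^+ N * (M + M)).
  by ring.
exact: hC _ (schwartz_tau_fun t sphi) _ (seminorms_le_tau_fun t hM).
Qed.

End Tempered.

Section RealSeries.
Variable R : realType.
Implicit Types (u v : nat -> R).

Lemma cvg_series_dominated u v : (forall n, `|u n| <= v n) ->
  cvgn (series v) -> cvgn (series u).
Proof.
move=> uv cv; apply: (@normed_cvg _ R^o).
by apply: (series_le_cvg _ _ uv) => // n; exact: le_trans (uv n).
Qed.

Lemma ler_norm_lim_series u v : (forall n, `|u n| <= v n) ->
  cvgn (series v) -> `|limn (series u)| <= limn (series v).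
Proof.
move=> uv cv.
have cn : cvgn [normed series u].
  by apply: (series_le_cvg _ _ uv) => // n; exact: le_trans (uv n).
apply: le_trans (@lim_series_norm _ R^o u cn) _.
exact: lim_series_le.
Qed.

Lemma series_addn_shift u m n :
  series u (n + m)%N = series u m + series (fun k => u (k + m)%N) n.
Proof.
by rewrite series_addn /series /= (big_addn 0 _ m) addnK.
Qed.

Lemma lim_series_shift u m : cvgn (series u) ->
  cvgn (series (fun k => u (k + m)%N)) /\
  limn (series u) = series u m + limn (series (fun k => u (k + m)%N)).
Proof.
move=> cu.
have tail : series (fun k => u (k + m)%N) @ \oo --> limn (series u) - series u m.
  have -> : series (fun k => u (k + m)%N) =
            fun n => series u (n + m)%N - series u m.
    by apply/funext => n; rewrite series_addn_shift addrC addKr.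
  by apply: cvgB; [rewrite (cvg_shiftn m (series u))|exact: cvg_cst].
by split; [exact: cvgP tail|rewrite (cvg_lim _ tail) // addrC subrK].
Qed.

Lemma cvg_series_eventually_eq u v m : (forall n, (m <= n)%N -> u n = v n) ->
  cvgn (series v) -> cvgn (series u).
Proof.
move=> uv cv; have [cvm _] := lim_series_shift m cv.
have cu : cvgn (series (fun k => u (k + m)%N)).
  suff -> : (fun k => u (k + m)%N) = (fun k => v (k + m)%N) by [].
  by apply/funext => k; rewrite uv // leq_addl.
apply/cvg_ex; exists (series u m + limn (series (fun k => u (k + m)%N))).
rewrite -(cvg_shiftn m (series u)).
under eq_fun do rewrite series_addn_shift.
by apply: cvgD; [exact: cvg_cst|exact: cu].
Qed.

Lemma ex_small_series_tail u e : cvgn (series u) -> 0 < e ->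
  exists m, `|limn (series (fun k => u (k + m)%N))| <= e.
Proof.
move=> cu e0; have /cvgrPdist_le /(_ e e0) [m _ hm] := cu.
exists m; have [_ split_u] := lim_series_shift m cu.
rewrite -[X in `|X|](addKr (series u m)) -split_u addrC.
exact: (hm m (leqnn m)).
Qed.

Lemma cvg_lim_series_dominated {T : Type} (F : set_system T) {FF : Filter F}
    (d : T -> nat -> R) v :
  (forall h n, `|d h n| <= v n) -> cvgn (series v) ->
  (forall n, d ^~ n @ F --> 0) -> (fun h => limn (series (d h))) @ F --> 0.
Proof.
move=> dv cv d0; apply/cvgrPdist_le => e e0.
have [m tail_m] := ex_small_series_tail cv (divr_gt0 e0 (ltr0n _ 2)).
have head0 k : (fun h => series (d h) k) @ F --> 0.
  elim: k => [|k IH].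
    have -> : (fun h => series (d h) 0) = fun=> 0.
      by apply/funext => h; rewrite /series /= big_geq.
    exact: cvg_cst.
  under eq_fun do rewrite seriesSr.
  by rewrite -[0]addr0; apply: cvgD.
have /cvgrPdist_le /(_ (e / 2) (divr_gt0 e0 (ltr0n _ 2))) := head0 m.
apply: filterS => h; rewrite sub0r normrN => head_h.
have cd : cvgn (series (d h)) by exact: cvg_series_dominated (dv h) cv.
have [cdm ->] := lim_series_shift m cd.
have [cvm _] := lim_series_shift m cv.
rewrite sub0r normrN (splitr e); apply: le_trans (ler_normD _ _) _.
apply: lerD => //.
apply: le_trans (ler_norm_lim_series (fun k => dv h (k + m)%N) cvm) _.
exact: le_trans (ler_norm _) tail_m.
Qed.

End RealSeries.

Definition fun_series {R : realType} (u : nat -> R -> R) : R -> R :=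
  fun x => limn (series (fun n => u n x)).

Section TermwiseDerivative.
Variable R : realType.
Implicit Types (f : R -> R) (x : R).

Lemma difference_quotientE f x :
  (fun h => h^-1 *: ((f \o shift x) (h *: 1) - f x)) =
  (fun h => h^-1 * (f (h + x) - f x)).
Proof. by apply/funext => h /=; rewrite [h *: 1]mulr1. Qed.

Lemma cvg_difference_quotient f x : derivable f x 1 ->
  (fun h => h^-1 * (f (h + x) - f x)) @ 0^' --> derive1 f x.
Proof. by rewrite /derivable difference_quotientE. Qed.

Lemma derivable_difference_quotient f x l :
  (fun h => h^-1 * (f (h + x) - f x)) @ 0^' --> l ->
  derivable f x 1 /\ derive1 f x = l.
Proof.
move=> dq; split; last exact: cvg_lim dq.
by rewrite /derivable difference_quotientE; exact: cvgP dq.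
Qed.

Lemma difference_quotient_err_le f c x h : (forall y, derivable f y 1) ->
  (forall y, `|derive1 f y| <= c) ->
  `|h^-1 * (f (h + x) - f x) - derive1 f x| <= c + c.
Proof.
move=> df fc; apply: le_trans (ler_normB _ _) _; rewrite lerD // normrM.
have [->|h0] := eqVneq h 0.
  by rewrite invr0 normr0 mul0r (le_trans _ (fc x)).
have := ler_dist_derive1 x (h + x) df fc; rewrite addrK => dist_le.
apply: le_trans (ler_wpM2l (normr_ge0 _) dist_le) _.
by rewrite mulrCA -normrM mulVf // normr1 mulr1.
Qed.

Lemma derive1_series (v : nat -> R -> R) (a c : nat -> R) x :
  (forall n y, derivable (v n) y 1) ->
  (forall n y, `|v n y| <= a n) -> (forall n y, `|derive1 (v n) y| <= c n) ->
  cvgn (series a) -> cvgn (series c) ->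
  derivable (fun_series v) x 1 /\
  derive1 (fun_series v) x = fun_series (fun n => derive1 (v n)) x.
Proof.
move=> dv va vc ca cc; apply: derivable_difference_quotient.
set W := fun_series (fun n => derive1 (v n)) x.
pose d h n := h^-1 * (v n (h + x) - v n x) - derive1 (v n) x.
have cv y : cvgn (series (fun n => v n y)) by exact: cvg_series_dominated ca.
have cW : cvgn (series (fun n => derive1 (v n) x)).
  exact: cvg_series_dominated cc.
have quotientE h :
    h^-1 * (fun_series v (h + x) - fun_series v x) = limn (series (d h)) + W.
  rewrite /fun_series.
  have -> : d h = h^-1 *: ((fun n => v n (h + x)) - (fun n => v n x)) -
                  (fun n => derive1 (v n) x) by [].
  have cvB : cvgn (series ((fun n => v n (h + x)) - (fun n => v n x))).
    exact: is_cvg_seriesB.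
  rewrite (lim_seriesB (is_cvg_seriesZ (k := h^-1) cvB) cW) (lim_seriesZ _ cvB).
  by rewrite (lim_seriesB (cv _) (cv _)) subrK.
have err0 : (fun h => limn (series (d h))) @ 0^' --> 0.
  apply: (cvg_lim_series_dominated (v := fun n => c n + c n)).
  - by move=> h n; exact: difference_quotient_err_le.
  - exact: is_cvg_seriesD.
  - move=> n; have dq := cvg_difference_quotient (dv n x).
    by have := cvgB dq (cvg_cst (derive1 (v n) x)); rewrite subrr; apply.
under eq_fun do rewrite quotientE.
by have := cvgD err0 (cvg_cst W); rewrite add0r; apply.
Qed.

End TermwiseDerivative.

Section SchwartzSeries.
Variable R : realType.
Variables (u : nat -> R -> R) (L : nat -> nat) (beta : nat -> R).
Hypothesis u_schwartz : forall n, schwartz (u n).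
Hypothesis u_seminorms : forall n, seminorms_le (L n) (u n) (beta n).
Hypothesis L_ge : forall n, (n <= L n)%N.
Hypothesis beta_summable : cvgn (series beta).

Lemma ex_summable_majorant : exists al : nat -> nat -> nat -> R,
  (forall b g, cvgn (series (al b g))) /\
  forall b g n x, `|x ^+ b * derive1n g (u n) x| <= al b g n.
Proof.
have [B hB] := choice (fun p : nat * nat * nat => (u_schwartz p.1.1).2 p.1.2 p.2).
pose al b g n := if (b <= L n)%N && (g <= L n)%N then beta n else B (n, b, g).
exists al; split => [b g|b g n x].
- apply: (cvg_series_eventually_eq (m := maxn b g)) beta_summable => n bgn.
  rewrite /al !(leq_trans _ (L_ge n)) ?(leq_trans _ bgn) ?leq_maxl ?leq_maxr //.
- rewrite /al; case: ifP => [/andP[hb hg]|_]; first exact: u_seminorms.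
  exact: (hB (n, b, g)).
Qed.

Lemma derive1n_fun_series :
  smooth (fun_series u) /\
  forall g, derive1n g (fun_series u) = fun_series (fun n => derive1n g (u n)).
Proof.
have [al [cal ual]] := ex_summable_majorant.
have bound0 g n x : `|derive1n g (u n) x| <= al 0%N g n.
  by have := ual 0%N g n x; rewrite expr0 mul1r.
have step g x := derive1_series x (fun n y => (u_schwartz n).1 g y)
  (bound0 g) (bound0 g.+1) (cal 0%N g) (cal 0%N g.+1).
have DE g : derive1n g (fun_series u) = fun_series (fun n => derive1n g (u n)).
  elim: g => // g IH; rewrite derive1nS IH; apply/funext => x.
  by have [_ ->] := step g x.
by split=> // g x; rewrite DE; have [] := step g x.
Qed.

Lemma weight_derive1n_fun_series_le (a : nat -> R) b g x :
  cvgn (series a) -> (forall n, `|x ^+ b * derive1n g (u n) x| <= a n) ->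
  `|x ^+ b * derive1n g (fun_series u) x| <= limn (series a).
Proof.
move=> ca ua; have [al [cal ual]] := ex_summable_majorant.
have [_ ->] := derive1n_fun_series.
rewrite /fun_series -[_ * _]/(x ^+ b *: _) -lim_seriesZ.
  exact: ler_norm_lim_series ua ca.
apply: cvg_series_dominated (cal 0%N g) => n.
by have := ual 0%N g n x; rewrite expr0 mul1r.
Qed.

Lemma schwartz_fun_series : schwartz (fun_series u).
Proof.
have [al [cal ual]] := ex_summable_majorant.
split=> [|b g]; first by case: derive1n_fun_series.
exists (limn (series (al b g))) => x.
exact: weight_derive1n_fun_series_le (cal b g) (ual b g ^~ x).
Qed.

Lemma seminorms_le_fun_series N : (forall n, (N <= L n)%N) ->
  seminorms_le N (fun_series u) (limn (series beta)).
Proof.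
move=> NL b g x hb hg; apply: weight_derive1n_fun_series_le beta_summable _ => n.
by apply: u_seminorms; apply: leq_trans (NL n).
Qed.

End SchwartzSeries.

Section TranslationLipschitz.
Variable R : realType.
Implicit Types (f : R -> R) (T t s x : R).

Lemma weight_dist_shift_le f T (B : R) b x t s :
  (forall y, derivable f y 1) -> (forall y, `|derive1 f y| <= B) ->
  (forall y, `|y ^+ b * derive1 f y| <= B) ->
  t \in `[0, T] -> s \in `[0, T] ->
  `|x ^+ b * (f (x - t) - f (x - s))| <= (1 + T) ^+ b * (B + B) * `|t - s|.
Proof.
move=> df f'B wf'B; wlog st : t s / s <= t.
  move=> W; have [/W//|/ltW ts ht hs] := leP s t.
  by rewrite -normrN -mulrN opprB distrC; apply: W.
move=> ht hs; have xts : x - t <= x - s by rewrite lerD2l lerN2.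
have [c c_in E] := @MVT_segment R f (fun z => derive f z 1) _ _ xts
  (fun z _ => derivableP (df z)) (derivable_within_continuous (fun z _ => df z)).
have -> : f (x - t) - f (x - s) = - (derive1 f c * (t - s)).
  by rewrite -opprB E derive1E; congr (- (_ * _)); lra.
rewrite mulrN normrN mulrA normrM ler_wpM2r //.
move: c_in ht hs; rewrite !in_itv /= => /andP[c1 c2] /andP[t0 tT] /andP[s0 sT].
apply: le_trans (normr_weight_shift_le x (x - c) _ b) _.
rewrite opprB addrCA subrr addr0.
apply: ler_pM; rewrite ?exprn_ge0 ?addr_ge0 ?(le_trans _ (f'B c)) ?lerD //.
have [xc0 xcT] : 0 <= x - c /\ x - c <= T by split; lra.
by apply: lerXn2r; rewrite ?nnegrE ?addr_ge0 ?lerD2l ?ger0_norm // (le_trans xc0).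
Qed.

(* The difference tau_t f - tau_s f, in the shape of the linearity axiom of
   [tempered]. *)
Lemma seminorms_le_tau_fun_sub f T N : 0 <= T -> schwartz f -> exists K, 0 <= K /\
  forall t s, t \in `[0, T] -> s \in `[0, T] ->
    seminorms_le N (fun y => -1 * tau_fun s f y + tau_fun t f y) (K * `|t - s|).
Proof.
move=> T0 sf; have [B hB] := schwartz_seminorms_le N.+1 sf.
have B0 := seminorms_le_ge0 hB.
exists ((1 + T) ^+ N * (B + B)).
split; first by rewrite mulr_ge0 ?exprn_ge0 ?addr_ge0.
move=> t s ht hs b g x hb hg.
have sf_tau r : smooth (tau_fun r f) := smooth_tau_fun (t := r) sf.1.
rewrite derive1n_lin // !derive1n_tau_fun /tau_fun mulN1r addrC.
apply: le_trans (weight_dist_shift_le x (T := T) (B := B) (b := b) _ _ _ ht hs) _.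
- by move=> y; exact: sf.1.
- by move=> y; have := hB 0%N g.+1 y isT hg; rewrite expr0 mul1r derive1nS.
- by move=> y; have := hB b g.+1 y (leqW hb) hg; rewrite derive1nS.
rewrite ler_wpM2r // ler_wpM2r ?addr_ge0 //.
by apply: ler_weXn2l => //; rewrite lerDl.
Qed.

End TranslationLipschitz.

Section GlidingHump.
Variable R : realType.
Variables (T : R) (X : R -> (R -> R) -> R).
Hypothesis T_ge0 : 0 <= T.
Hypothesis X_path : path_C T X.

Lemma path_C_bounded psi : schwartz psi ->
  exists A, forall t, t \in `[0, T] -> `|X t psi| <= A.
Proof.
move=> spsi; have cX := X_path.2 psi spsi.
have [tM _ XM] := EVT_max T_ge0 cX; have [tm _ Xm] := EVT_min T_ge0 cX.
exists (`|X tm psi| + `|X tM psi|) => t ht.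
have [/= lo hi] := (Xm t ht, XM t ht).
have := ler_norm (- X tm psi); have := ler_norm (X tM psi); rewrite normrN.
have := normr_ge0 (X tm psi); have := normr_ge0 (X tM psi).
by rewrite ler_norml => *; apply/andP; split; lra.
Qed.

Record hump := Hump {
  hump_fun : R -> R; hump_time : R; hump_order : nat; hump_const : R }.

Definition hump_spec (F : R -> R) (L : nat) (K : R) (j : nat) (h : hump) :=
  [/\ hump_time h \in `[0, T], schwartz (hump_fun h),
      seminorms_le L (hump_fun h) (2^-1 ^+ j / K),
      `|X (hump_time h) F| + j.+1%:R <= `|X (hump_time h) (hump_fun h)| &
      0 <= hump_const h /\
      tempered_bound (hump_order h) (hump_const h) (X (hump_time h))].

Lemma ex_hump :
  (forall N C, 0 <= C -> exists t psi M,
     [/\ t \in `[0, T], schwartz psi, seminorms_le N psi M &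
         C * M < `|X t psi|]) ->
  forall F L K j, schwartz F -> 1 <= K -> exists h, hump_spec F L K j h.
Proof.
move=> unbounded F L K j sF K1.
have [A hA] := path_C_bounded sF.
have A0 : 0 <= A.
  have T0 : (0 : R) \in `[0, T] by rewrite in_itv /= lexx.
  exact: le_trans (hA 0 T0).
pose w : R := 2^-1 ^+ j / K.
have w0 : 0 < w.
  by rewrite divr_gt0 ?exprn_gt0 ?invr_gt0 // (lt_le_trans ltr01 K1).
have C0_ge0 : 0 <= (A + j.+1%:R) / w.
  exact: divr_ge0 (addr_ge0 A0 (ler0n _ _)) (ltW w0).
have [t [psi [M [ht spsi psiM big]]]] := unbounded L _ C0_ge0.
have Xt := X_path.1 t ht.
have M0 : 0 < M.
  rewrite lt0r (seminorms_le_ge0 psiM) andbT; apply/eqP => M0.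
  have psi0 : psi = fun=> 0.
    apply/funext => x; apply/eqP; rewrite -normr_le0 -M0.
    by have := psiM 0%N 0%N x isT isT; rewrite expr0 mul1r.
  by move: big; rewrite psi0 tempered_cst0 // M0 mulr0 normr0 ltxx.
have [N [C [C0 hC]]] := tempered_boundP Xt.
have wM0 : 0 <= w / M by rewrite divr_ge0 ?ltW.
exists (Hump (fun y => w / M * psi y) t N C); split => //=.
- exact: schwartzZ.
- have := seminorms_le_scale (w / M) spsi.1 psiM.
  by rewrite ger0_norm // divfK // gt_eqF.
- rewrite temperedZ // normrM ger0_norm //.
  apply: le_trans (ler_wpM2l wM0 (ltW big)).
  by rewrite mulrCA divfK ?gt_eqF // mulfVK ?gt_eqF // lerD2r hA.
Qed.

Section HumpSequence.
Variable next : (R -> R) -> nat -> R -> nat -> hump.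
Hypothesis nextP : forall F L K j, schwartz F -> 1 <= K ->
  hump_spec F L K j (next F L K j).

Record hump_state := HumpState {
  state_sum : R -> R; state_order : nat; state_weight : R }.

(* Raising the order to N_j and adding C_j to the weight makes every later hump
   2^-k / C_j small in the semi-norms that bound X_(t_j): the tail after hump j
   contributes at most 1 at time t_j, see hump_tail_le. *)
Fixpoint state (j : nat) : hump_state :=
  if j is i.+1 then
    let s := state i in
    let h := next (state_sum s) (state_order s) (state_weight s) i in
    HumpState (fun x => state_sum s x + hump_fun h x)
      (maxn (maxn (state_order s) (hump_order h)) j)
      (state_weight s + hump_const h)
  else HumpState (fun=> 0) 0 1.

Definition hump_at j :=
  next (state_sum (state j)) (state_order (state j)) (state_weight (state j)) j.

Local Notation F j := (state_sum (state j)).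
Local Notation L j := (state_order (state j)).
Local Notation K j := (state_weight (state j)).
Local Notation chi j := (hump_fun (hump_at j)).
Local Notation time j := (hump_time (hump_at j)).

Lemma state_inv j : [/\ schwartz (F j), 1 <= K j & (j <= L j)%N].
Proof.
elim: j => [|j [sF K1 jL]]; first by split => //; exact: schwartz_cst0.
have [_ schi _ _ [C0 _]] := nextP (state_order (state j)) j sF K1.
by split => /=; [exact: schwartzD|rewrite ler_wpDr|rewrite leq_maxr].
Qed.

Lemma hump_atP j : hump_spec (F j) (L j) (K j) j (hump_at j).
Proof. by have [sF K1 _] := state_inv j; exact: nextP. Qed.

Lemma state_order_homo : {homo (fun j => L j) : i j / (i <= j)%N}.
Proof.
by apply: homo_leq => // [i j k /leq_trans|j]; [apply|rewrite /= !leq_max leqnn].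
Qed.

Lemma state_weight_homo : {homo (fun j => K j) : i j / (i <= j)%N >-> i <= j}.
Proof.
apply/nondecreasing_seqP => j /=; rewrite lerDl.
by have [_ _ _ _ []] := hump_atP j.
Qed.

Lemma state_sumE j x : F j x = series (fun i => chi i x) j.
Proof.
elim: j => [|j IH]; first by rewrite /series /= big_geq.
by rewrite seriesSr -IH.
Qed.

Definition hump_bound j : R := 2^-1 ^+ j / K j.

Lemma hump_bound_le j : 0 <= hump_bound j <= 2^-1 ^+ j.
Proof.
have [_ K1 _] := state_inv j; have K0 := lt_le_trans ltr01 K1.
rewrite /hump_bound divr_ge0 ?exprn_ge0 ?invr_ge0 ?(ltW K0) //=.
by rewrite ler_pdivrMr // ler_peMr ?exprn_ge0 ?invr_ge0.
Qed.

Lemma hump_bound_summable m : cvgn (series (fun k => hump_bound (k + m)%N)).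
Proof.
apply: (@cvg_series_dominated _ _ (geometric 1 2^-1)).
  move=> k; have /andP[b0 b1] := hump_bound_le (k + m)%N.
  rewrite ger0_norm //= mul1r; apply: le_trans b1 _.
  by apply: ler_wiXn2l; rewrite ?invr_ge0 ?invf_le1 ?ler1n ?leq_addr.
by apply: is_cvg_geometric_series; rewrite ger0_norm ?invf_lt1 ?ltr1n.
Qed.

Lemma schwartz_hump_tail m :
  schwartz (fun_series (fun k => chi (k + m)%N)) /\
  seminorms_le (L m) (fun_series (fun k => chi (k + m)%N))
    (limn (series (fun k => hump_bound (k + m)%N))).
Proof.
have schi k : schwartz (chi (k + m)%N) by have [] := hump_atP (k + m)%N.
have bchi k : seminorms_le (L (k + m)%N) (chi (k + m)%N) (hump_bound (k + m)%N).
  by have [] := hump_atP (k + m)%N.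
have Lk k : (k <= L (k + m)%N)%N.
  by have [_ _ kL] := state_inv (k + m)%N; apply: leq_trans kL; rewrite leq_addr.
have cb := hump_bound_summable (m := m).
split; first exact: schwartz_fun_series schi bchi Lk cb.
apply: (seminorms_le_fun_series schi bchi Lk cb) => k.
by apply: state_order_homo; rewrite leq_addl.
Qed.

Lemma hump_tail_le j :
  `|X (time j) (fun_series (fun k => chi (k + j.+1)%N))| <= 1.
Proof.
have [_ _ _ _ [C0 XC]] := hump_atP j.
have [stail btail] := schwartz_hump_tail j.+1.
have NL : (hump_order (hump_at j) <= L j.+1)%N by rewrite /= leq_max leq_maxr.
apply: le_trans (XC _ stail _ (seminorms_leW NL (lexx _) btail)) _.
have cb := hump_bound_summable (m := j.+1).
rewrite -[_ * _]/(_ *: _) -lim_seriesZ //.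
have geo : series (geometric 2^-1 (2^-1 : R)) @ \oo --> (1 : R).
  have := @cvg_geometric_series R 2^-1 2^-1.
  rewrite ger0_norm ?invf_lt1 ?ltr1n // => /(_ isT).
  by rewrite [X in _ --> X -> _](_ : _ = 1) //; field.
rewrite -(cvg_lim _ geo) //.
apply: lim_series_le; [exact: is_cvg_seriesZ|exact: cvgP geo|].
move=> k; rewrite scalrfctE /= /hump_bound -[_ *: _]/(_ * _) mulrCA.
have [_ Kj1 _] := state_inv j; have [_ Kk1 _] := state_inv (k + j.+1)%N.
have Kk0 : 0 < K (k + j.+1)%N := lt_le_trans ltr01 Kk1.
have CK : hump_const (hump_at j) / K (k + j.+1)%N <= 1.
  rewrite ler_pdivrMr // mul1r.
  apply: le_trans (state_weight_homo (leq_addl k j.+1)).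
  by rewrite /= lerDr (le_trans ler01).
apply: le_trans (ler_wpM2l (exprn_ge0 _ _) CK) _; first by rewrite invr_ge0.
rewrite mulr1 -exprS; apply: ler_wiXn2l; rewrite ?invr_ge0 ?invf_le1 ?ler1n //.
by rewrite addnS ltnS leq_addr.
Qed.

Lemma fun_series_humpE j :
  fun_series (fun n => chi n) =
  fun x => F j x + chi j x + fun_series (fun k => chi (k + j.+1)%N) x.
Proof.
apply/funext => x.
have cx : cvgn (series (fun n => chi n x)).
  apply: (@cvg_series_dominated _ _ hump_bound) => [n|].
    have [_ _ bn _ _] := hump_atP n.
    by have := bn 0%N 0%N x isT isT; rewrite expr0 mul1r.
  by have := hump_bound_summable (m := 0%N); under eq_fun do rewrite addn0.
by rewrite /fun_series (lim_series_shift j.+1 cx).2 seriesSr state_sumE.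
Qed.

Lemma hump_series_unbounded : exists2 psi, schwartz psi &
  forall j : nat, exists2 t, t \in `[0, T] & j%:R <= `|X t psi|.
Proof.
have schi j : schwartz (chi j) by have [] := hump_atP j.
exists (fun_series (fun n => chi n)).
  have [+ _] := schwartz_hump_tail 0.
  by congr schwartz; congr fun_series; apply/funext => k; rewrite addn0.
move=> j; have [tj _ _ big _] := hump_atP j; exists (time j) => //.
have Xt := X_path.1 _ tj.
have [stail _] := schwartz_hump_tail j.+1.
have [sF _ _] := state_inv j.
set a := X (time j) (F j); set b := X (time j) (chi j).
set c := X (time j) (fun_series (fun k => chi (k + j.+1)%N)).
have -> : X (time j) (fun_series (fun n => chi n)) = a + b + c.
  by rewrite (fun_series_humpE j) !temperedD //; exact: schwartzD.
have tail := hump_tail_le j.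
have := ler_normD (a + b) (- a); rewrite normrN addrAC subrr add0r.
have := ler_normD (a + b + c) (- c); rewrite normrN addrK.
move: big tail; rewrite -/a -/b -/c; lra.
Qed.

End HumpSequence.

Lemma path_C_equibounded :
  exists N C, 0 <= C /\ forall t, t \in `[0, T] -> tempered_bound N C (X t).
Proof.
apply: contrapT => bounded.
have unbounded N C : 0 <= C -> exists t psi M,
    [/\ t \in `[0, T], schwartz psi, seminorms_le N psi M & C * M < `|X t psi|].
  move=> C0; apply: contrapT => small; apply: bounded; exists N, C.
  split => // t ht psi spsi M psiM; rewrite leNgt; apply/negP => lt.
  by apply: small; exists t, psi, M.
have ex_next (p : (R -> R) * nat * R * nat) : exists h,
    schwartz p.1.1.1 -> 1 <= p.1.2 -> hump_spec p.1.1.1 p.1.1.2 p.1.2 p.2 h.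
  have [[sF K1]|nFK] := pselect (schwartz p.1.1.1 /\ 1 <= p.1.2).
    by have [h ?] := ex_hump unbounded p.1.1.2 p.2 sF K1; exists h.
  by exists (Hump (fun=> 0) 0 0 0) => sF K1; case: nFK.
have [next nextP] := choice ex_next.
have [psi spsi psi_unbounded] := hump_series_unbounded
  (next := fun F L K j => next (F, L, K, j)) (fun F L K j => nextP (F, L, K, j)).
have [A hA] := path_C_bounded spsi.
have [t ht psi_big] := psi_unbounded (Num.truncn A).+1.
by have := lt_le_trans (truncnS_gt A) (le_trans psi_big (hA t ht)); rewrite ltxx.
Qed.

End GlidingHump.

Section TranslatedPath.
Variable R : realType.
Variables (T : R) (X : R -> (R -> R) -> R).
Hypothesis T_ge0 : 0 <= T.
Hypothesis X_path : path_C T X.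

Lemma G_dist_le phi : schwartz phi -> exists2 K, 0 <= K &
  forall t s, t \in `[0, T] -> s \in `[0, T] ->
    `|G X t phi - G X s phi| <=
    K * `|t - s| + `|X t (tau_fun s phi) - X s (tau_fun s phi)|.
Proof.
move=> sphi; have [N [C [C0 XC]]] := path_C_equibounded T_ge0 X_path.
have [K [K0 hK]] := seminorms_le_tau_fun_sub N T_ge0 sphi.
exists (C * K) => [|t s ht hs]; first exact: mulr_ge0.
have [sts stt] := (schwartz_tau_fun s sphi, schwartz_tau_fun t sphi).
have := XC t ht _ (schwartz_lin (-1) sts stt) _ (hK t s ht hs).
rewrite (X_path.1 t ht).1 // mulN1r mulrA addrC /G /tau => shift_le.
have := ler_normD (X t (tau_fun t phi) - X t (tau_fun s phi))
                  (X t (tau_fun s phi) - X s (tau_fun s phi)).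
by rewrite addrA subrK; lra.
Qed.

Lemma G_continuous phi : schwartz phi ->
  {within `[0, T], continuous (fun t => G X t phi)}.
Proof.
move=> sphi; have [K K0 GK] := G_dist_le sphi.
apply/subspace_continuousP => s hs.
have cX := X_path.2 _ (schwartz_tau_fun s sphi).
have {}cX := (subspace_continuousP _ _).1 cX s hs.
apply/cvgrPdist_le => e e0; have e20 : 0 < e / 2 by rewrite divr_gt0.
have /cvgrPdist_le /(_ _ e20) Xnear := cX.
have K1 : 0 < K + 1 by rewrite ltr_wpDl.
have /cvgrPdist_lt /(_ _ (divr_gt0 e20 K1)) tnear := @cvg_id _ (nbhs s).
rewrite near_withinE in Xnear *; apply: filterS2 Xnear tnear => t Xt ts At.
have Kts : K * `|t - s| <= e / 2.
  apply: (@le_trans _ _ ((K + 1) * (e / 2 / (K + 1)))).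
    by apply: ler_pM; rewrite ?lerDl // distrC ltW.
  by rewrite mulrC divfK // gt_eqF.
have := GK t s At hs; have := Xt At; rewrite /from_subspace /= distrC.
by rewrite [`|G X s phi - _|]distrC; lra.
Qed.

Lemma path_C_G : path_C T (G X).
Proof.
split=> [t ht|phi sphi]; first exact: tempered_tau (X_path.1 t ht).
exact: G_continuous.
Qed.

End TranslatedPath.

Lemma S_bounded_translates (R : realType) (T : R) (B : set (R -> R)) :
  0 <= T -> S_bounded B ->
  S_bounded [set tau_fun t phi | t in [set` `[0, T]] & phi in B].
Proof.
move=> T0 [BS Bb]; split=> [_ [t _ [phi Bphi <-]]|b g].
  exact/schwartz_tau_fun/BS.
have [C1 h1] := Bb 0%N g; have [C2 h2] := Bb b g.
exists ((1 + T) ^+ b * (C1 + C2)) => _ [t ht [phi Bphi <-]] x.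
apply: le_trans (weight_derive1n_tau_fun_le _ _ _ _ _) _.
move: ht; rewrite /= in_itv /= => /andP[t0 tT].
apply: ler_pM; rewrite ?exprn_ge0 ?addr_ge0 //.
  by apply: lerXn2r; rewrite ?nnegrE ?addr_ge0 // lerD2l ger0_norm.
apply: lerD; last exact: h2.
by have := h1 phi Bphi (x - t); rewrite expr0 mul1r.
Qed.

Lemma continuous_C_G (R : realType) (T : R) : 0 <= T -> continuous_C T (@G R).
Proof.
move=> T0 X _ B eps Bb eps0.
exists [set tau_fun t phi | t in [set` `[0, T]] & phi in B], eps.
split; [exact: S_bounded_translates|split => // Y _ XY t phi ht Bphi].
by apply: XY => //; exists t => //; exists phi.
Qed.

Theorem proposition3 (R : realType) (T : R) (hT : 0 < T) :
  (forall X, path_C T X -> path_C T (G X)) /\ continuous_C T (@G R).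
Proof.
split; [move=> X; exact: path_C_G (ltW hT)|exact: continuous_C_G (ltW hT)].
Qed.
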